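(* Let $t\in\mathbb{Z}_+$ and let agent $i$ have binary values $v_i(g)\in\{0,1\}$ and quantile $\tau_i=\frac{t}{t+1}$. Let $B\subseteq M$ be a bundle containing exactly $\ell$ items of value $1$ for $i$. Then $v_i(B)=1$ if and only if the number of items in $B$ of value $0$ for $i$ is at most $\ell t-1$.
   Context: For a nonempty bundle $S\subseteq M$, order its items as $g_1,\dots,g_{|S|}$ with $v_i(g_1)\le\dots\le v_i(g_{|S|})$; then $v_i(S)=v_i(g_{\lceil \tau_i|S|\rceil})$ if $\tau_i>0$ and $v_i(S)=v_i(g_1)$ if $\tau_i=0$. *)

From mathcomp Require Import all_boot all_order all_algebra.
Set Implicit Arguments. Unset Strict Implicit. Unset Printing Implicit Defensive.
Import Order.TTheory GRing.Theory Num.Theory.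
Local Open Scope ring_scope.

(* Quantile value of a nonempty bundle S for valuation v with quantile tau:
   sort the item values of S increasingly as v(g_1) <= ... <= v(g_|S|);
   return v(g_{ceil(tau |S|)}) if tau > 0 and v(g_1) if tau = 0.
   (Indices are 1-based in the paper, 0-based in nth.) *)
Definition qval (R : realDomainType) (M : finType) (v : M -> R) (tau : rat)
    (S : {set M}) : R :=
  let s := sort <=%R [seq v g | g <- enum S] in
  if tau == 0 then nth 0 s 0
  else nth 0 s (`|Num.ceil (tau * (#|S|%:R))|%N).-1.

From mathcomp Require Import all_boot all_order all_algebra zify.
Import Order.TTheory GRing.Theory Num.Theory.
Local Open Scope ring_scope.

(* With binary values the sorted value sequence of B is z zeros followed by l
   ones, so v(B) = 1 exactly when the quantile index ceil(t (z + l) / (t + 1))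
   exceeds z, i.e. when z (t + 1) < t (z + l), i.e. when z < l t. *)

Section SortTwoValued.
Context {d : Order.disp_t} {T : orderType d}.

Lemma sorted_nseq_cat (a b : T) m n :
  (a <= b)%O -> sorted <=%O (nseq m a ++ nseq n b).
Proof.
move=> le_ab; elim: m => [|m IHm] /=.
  by case: n => //= n; elim: n => //= n ->; rewrite lexx.
by rewrite (path_sortedE le_trans) IHm all_cat !all_nseq lexx le_ab !orbT.
Qed.

Lemma sort_two_valued (a b : T) (s : seq T) :
  (a < b)%O -> {subset s <= [:: a; b]} ->
  sort <=%O s = nseq (count_mem a s) a ++ nseq (count_mem b s) b.
Proof.
move=> lt_ab s_ab; apply: (sorted_eq le_trans le_anti).
- exact: sort_le_sorted.
- exact/sorted_nseq_cat/ltW.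
have not_a_is_b : filter (predC (pred1 a)) s = filter (pred1 b) s.
  apply: eq_in_filter => x /s_ab; rewrite !inE /=.
  by case/orP=> /eqP ->; rewrite ?eqxx ?(lt_eqF lt_ab) // eq_sym (lt_eqF lt_ab).
rewrite perm_sort -(perm_filterC (pred1 a) s) not_a_is_b.
by rewrite -!size_filter -!(all_pred1P _ _ (filter_all _ _)).
Qed.

End SortTwoValued.

Lemma card_set_in_count (T : finType) (A : {set T}) (P : pred T) :
  #|[set x in A | P x]| = count P (enum A).
Proof.
rewrite -size_filter -(card_uniqP (filter_uniq _ (enum_uniq _))).
by apply: eq_card => x; rewrite mem_filter mem_enum !inE andbC.
Qed.

Lemma nth_nseq_cat (T : Type) (x0 a b : T) m n i :
  nth x0 (nseq m a ++ nseq n b) i =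
  if (i < m)%N then a else if (i < m + n)%N then b else x0.
Proof. by rewrite nth_cat size_nseq !nth_nseq; case: ltnP => // ?; rewrite ltn_subLR. Qed.

Definition quantile_rank {F : archiRealDomainType} (tau : F) (n : nat) : nat :=
  `|Num.ceil (tau * n%:R)|%N.

Section QuantileRank.
Variable F : archiRealDomainType.

Lemma ltn_quantile_rank (tau : F) m n :
  0 <= tau -> (m < quantile_rank tau n)%N = (m%:R < tau * n%:R).
Proof.
move=> tau_ge0; have taun_ge0 : 0 <= tau * n%:R by rewrite mulr_ge0.
rewrite -ltz_nat abszE ger0_norm ?ceil_gt_int //.
by rewrite ceil_ge0 (lt_le_trans (ltrN10 _)).
Qed.

Lemma quantile_rank_gt0 (tau : F) n :
  0 < tau -> (0 < n)%N -> (0 < quantile_rank tau n)%N.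
Proof. by move=> tau_gt0 n_gt0; rewrite ltn_quantile_rank ?ltW ?mulr_gt0 ?ltr0n. Qed.

Lemma quantile_rank_le (tau : F) n :
  0 <= tau <= 1 -> (quantile_rank tau n <= n)%N.
Proof.
case/andP=> tau_ge0 tau_le1; rewrite leqNgt ltn_quantile_rank // -leNgt.
by rewrite ler_piMl.
Qed.

End QuantileRank.

Lemma ltn_quantile_rank_frac (t z l : nat) :
  (z < quantile_rank (t%:R / t.+1%:R : rat) (z + l))%N = (z < l * t)%N.
Proof.
rewrite ltn_quantile_rank ?divr_ge0 // mulrAC ltr_pdivlMr ?ltr0n //.
by rewrite -!natrM ltr_nat; apply/idP/idP; nia.
Qed.

Lemma qvalE (R : realDomainType) (M : finType) (v : M -> R) (tau : rat)
    (S : {set M}) :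
  tau != 0 ->
  qval v tau S = nth 0 (sort <=%R [seq v g | g <- enum S]) (quantile_rank tau #|S|).-1.
Proof. by rewrite /qval => /negbTE ->. Qed.

Theorem lemma2 (R : realDomainType) (M : finType) (v : M -> R) (t l : nat)
    (B : {set M}) :
  (0 < t)%N ->
  (forall g : M, v g = 0 \/ v g = 1) ->
  B != set0 ->
  #|[set g in B | v g == 1]| = l ->
  (qval v ((t%:R / (t.+1)%:R) : rat) B = 1 <->
   (#|[set g in B | v g == 0]|%:Z <= (l * t)%:Z - 1)).
Proof.
move=> t_gt0 v01 B_neq0 card_ones; set z := #|[set g in B | v g == 0]|.
set tau : rat := t%:R / t.+1%:R.
have sort_values : sort <=%R [seq v g | g <- enum B] = nseq z 0 ++ nseq l 1.
  rewrite (@sort_two_valued _ _ 0 1) ?ltr01 //; last first.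
    by move=> _ /mapP[g _ ->]; rewrite !inE; case: (v01 g) => ->; rewrite eqxx ?orbT.
  by rewrite !count_map -card_ones /z !card_set_in_count.
have card_B : #|B| = (z + l)%N.
  by rewrite cardE -(size_map v) -(size_sort <=%R) sort_values size_cat !size_nseq.
have tau_gt0 : 0 < tau by rewrite divr_gt0 ?ltr0n.
have rank_gt0 : (0 < quantile_rank tau #|B|)%N.
  by apply: quantile_rank_gt0; rewrite // card_gt0.
have rank_le : (quantile_rank tau #|B| <= #|B|)%N.
  by apply: quantile_rank_le; rewrite ltW //= ler_pdivrMr ?ltr0n // mul1r ler_nat.
rewrite qvalE ?gt_eqF // sort_values nth_nseq_cat.
move: rank_gt0 rank_le (ltn_quantile_rank_frac t z l); rewrite card_B.
set k := quantile_rank _ _ => k_gt0 k_le z_lt_k.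
have -> : (k.-1 < z + l)%N by lia.
have -> : (k.-1 < z)%N = ~~ (z < l * t)%N by rewrite -z_lt_k -leqNgt; lia.
case: ltnP => /= z_cmp_lt.
- by split=> // _; lia.
- by split=> [/eqP|]; [rewrite eq_sym oner_eq0 | lia].
Qed.
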